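(* Let $L:C(\Sigma_A^+)\to C(\Sigma_A^+)$ be a positive linear operator (i.e. $Lg\ge0$ whenever $g\ge0$) such that $L(\mathcal{P}_\delta)\subset\mathcal{P}_{\delta'}$ for some $0<\delta'<\delta$. Then there exists $\kappa<1$ such that $\Theta(Lf,Lg)\le\kappa\,\Theta(f,g)$ for all $f,g\in\mathcal{P}_\delta$.
   Context: $\Sigma_A^+$ is a one-sided subshift of finite type (compact space). For $\delta>0$, $\mathcal{P}_\delta=\{g\in C(\Sigma_A^+):g>0,\ \sup_{x,y}g(x)/g(y)\le e^\delta\}$. For strictly positive continuous $f,g$, the Hilbert projective metric is $\Theta(f,g)=\log\dfrac{\sup_x f(x)/g(x)}{\inf_x f(x)/g(x)}$. *)

From HB Require Import structures.
From mathcomp Require Import all_boot all_order all_algebra.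
From mathcomp Require Import all_classical all_reals all_analysis.
Set Implicit Arguments. Unset Strict Implicit. Unset Printing Implicit Defensive.
Import Order.TTheory GRing.Theory Num.Theory.
Local Open Scope classical_set_scope.
Local Open Scope ring_scope.

(* One-sided subshift of finite type on the alphabet 'I_k with 0-1
   transition matrix A: sequences x with A (x n) (x (n+1)) = 1 for all n. *)
Definition SigmaA (k : nat) (A : 'M[bool]_k) : set (nat -> 'I_k) :=
  [set x | forall n, A (x n) (x n.+1)].

Section Defs.
Variables (R : realType) (k : nat) (A : 'M[bool]_k).
Implicit Types f g : (nat -> 'I_k) -> R.

Definition contSigma f : Prop :=
  forall x, SigmaA A x -> forall eps : R, 0 < eps ->
    exists N : nat, forall y, SigmaA A y ->
      (forall n, (n < N)%N -> y n = x n) -> `|f y - f x| < eps.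

(* L is a positive linear operator C(Sigma_A^+) -> C(Sigma_A^+)
   (functions are only relevant through their values on Sigma_A^+). *)
Definition positive_linear_op (L : ((nat -> 'I_k) -> R) -> ((nat -> 'I_k) -> R)) : Prop :=
  [/\ (forall f, contSigma f -> contSigma (L f)),
      (forall f g (a b : R), contSigma f -> contSigma g ->
         forall x, SigmaA A x ->
           L (fun y => a * f y + b * g y) x = a * L f x + b * L g x)
    & (forall f, contSigma f -> (forall x, SigmaA A x -> 0 <= f x) ->
         forall x, SigmaA A x -> 0 <= L f x)].

Definition Pdelta (delta : R) g : Prop :=
  [/\ contSigma g,
      (forall x, SigmaA A x -> 0 < g x)
    & (forall x y, SigmaA A x -> SigmaA A y -> g x / g y <= expR delta)].

Definition Theta f g : R :=
  ln (sup [set f x / g x | x in SigmaA A] / inf [set f x / g x | x in SigmaA A]).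

End Defs.

From HB Require Import structures.
From mathcomp Require Import all_boot all_order all_algebra.
From mathcomp Require Import all_classical all_reals all_analysis.
From mathcomp Require Import ring lra.
Import Order.TTheory GRing.Theory Num.Theory.
Local Open Scope classical_set_scope.
Local Open Scope ring_scope.
Set Implicit Arguments. Unset Strict Implicit. Unset Printing Implicit Defensive.

(* Write a = inf f/g, b = sup f/g and f = a g + (b - a) g psi with 0 <= psi <= 1.
   For t = e^delta - 1 both 1 + t psi and (1 + t) - t psi lie in P_delta, so their
   images lie in P_delta'; this bounds the oscillation of L psi / L 1 by
   tanh (delta'/2) / tanh (delta/2) < 1.  Since g varies by at most a factor e^delta,
   L(g psi) is comparable to g(x) L psi, so the oscillation of L f / L g is at most a
   fixed fraction < 1 of b - a; as b/a <= e^(2 delta), this becomes a uniform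
   contraction of ln (sup / inf). *)

Section RealInequalities.
Variable R : realFieldType.

Lemma mul_lt_of_lt_div (c d e : R) : 0 <= c -> 0 <= d -> d < e / (c + 1) -> c * d < e.
Proof.
move=> c0 d0; rewrite ltr_pdivlMr ?ltr_wpDl // => h.
by apply: le_lt_trans h; nra.
Qed.

Lemma mulDD_le_bound (C D u M : R) : 0 <= C -> 0 <= D -> 1 <= M ->
  (C + u) * (D + u) <= M ^+ 2 * (C * D) -> 2 * u <= (M - 1) * (C + D).
Proof.
move=> C0 D0 M1 h.
have [su|su] := lerP (C + D + 2 * u) 0; first by nra.
have M21 : 0 <= M ^+ 2 - 1 by rewrite subr_ge0 expr_ge1 // (le_trans ler01).
have MCD : 0 <= M * (C + D) by rewrite mulr_ge0 ?addr_ge0 // (le_trans ler01).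
(* (C + D + 2u)^2 = 4 (C + u) (D + u) + (C - D)^2 <= 4 M^2 C D + (C - D)^2 <= M^2 (C + D)^2 *)
have : (C + D + 2 * u) ^+ 2 <= (M * (C + D)) ^+ 2.
  by have := mulr_ge0 M21 (sqr_ge0 (C - D)); nra.
by rewrite ler_sqr ?nnegrE ?MCD ?(ltW su) //; lra.
Qed.

Lemma sub_le_of_cross_bounds (M t p q P Q : R) :
  0 < t -> 1 <= M -> 0 < p -> 0 < q -> 0 <= P <= p -> 0 <= Q <= q ->
  p + t * P <= M * (q + t * Q) -> (1 + t) * q - t * Q <= M * ((1 + t) * p - t * P) ->
  P / p - Q / q <= (M - 1) * (t + 2) / (t * (M + 1)).
Proof.
move=> t0 M1 p0 q0 /andP[P0 Pp] /andP[Q0 Qq] hx hy.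
set al := P / p; set be := Q / q.
have eP : P = al * p by rewrite divfK ?gt_eqF.
have eQ : Q = be * q by rewrite divfK ?gt_eqF.
have al1 : al <= 1 by rewrite ler_pdivrMr ?mul1r.
have be0 : 0 <= be by apply: divr_ge0 Q0 (ltW q0).
(* with C = 1 + t be, D = 1 + t - t al and u = t (al - be), the product of the two
   bounds reads (C + u) (D + u) <= M^2 C D *)
have C0 : 0 <= 1 + t * be by nra.
have D0 : 0 <= 1 + t - t * al by nra.
have prod : (1 + t * be + t * (al - be)) * (1 + t - t * al + t * (al - be))
    <= M ^+ 2 * ((1 + t * be) * (1 + t - t * al)).
  rewrite -(ler_pM2l (mulr_gt0 p0 q0)).
  have hx0 : 0 <= p + t * P by nra.
  have hy0 : 0 <= (1 + t) * q - t * Q by nra.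
  by have := ler_pM hx0 hy0 hx hy; rewrite eP eQ; lra.
have := mulDD_le_bound C0 D0 M1 prod.
rewrite ler_pdivlMr ?mulr_gt0 //; last by lra.
by nra.
Qed.

Lemma quot_le_of_sub_le (a b rx ry th : R) : 0 < a -> a <= b -> a <= ry -> 0 <= th ->
  rx - ry <= th * (b - a) -> rx / ry <= 1 + th * (b / a - 1).
Proof.
move=> a0 ab ary th0; rewrite ler_pdivrMr ?(lt_le_trans a0) //; set r := b / a.
have -> : b = r * a by rewrite divfK ?gt_eqF.
have r1 : 0 <= r - 1 by rewrite subr_ge0 -(ler_pM2r a0) mul1r divfK ?gt_eqF.
have rya : 0 <= ry - a by rewrite subr_ge0.
by have := mulr_ge0 (mulr_ge0 th0 r1) rya; lra.
Qed.

Lemma shrink_ge0_lt1 (N th : R) : 1 <= N -> 0 <= th < 1 -> 0 <= 1 - (1 - th) / N < 1.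
Proof.
move=> N1 /andP[th0 th1]; have N0 : 0 < N by apply: lt_le_trans N1.
rewrite subr_ge0 ler_pdivrMr // mul1r ltrBlDr ltrDl divr_gt0 ?subr_gt0 // andbT.
by apply: le_trans N1; rewrite lerBlDr lerDl.
Qed.
End RealInequalities.

Section LogAndBounds.
Variable R : realType.

Lemma ln_le_subr1 (x : R) : 0 < x -> ln x <= x - 1.
Proof. by move=> x0; have := @le_ln1Dx R (x - 1); rewrite addrCA subrr addr0; apply; lra. Qed.

Lemma ln_le_affine (N r th q : R) : 1 <= r <= N -> th <= 1 -> 0 < q ->
  q <= 1 + th * (r - 1) -> ln q <= (1 - (1 - th) / N) * ln r.
Proof.
move=> /andP[r1 rN] th1 q0 qr.
have r0 : 0 < r by lra.
have N0 : 0 < N by lra.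
have -> : ln q = ln (q / r) + ln r by rewrite ln_div ?posrE // subrK.
have lnqr : ln (q / r) <= q / r - 1 by apply: ln_le_subr1; rewrite divr_gt0.
have qr' : q / r - 1 <= - ((1 - th) * (r - 1) / r).
  have -> : - ((1 - th) * (r - 1) / r) = (1 + th * (r - 1)) / r - 1 by field; lra.
  by rewrite lerD2r ler_pM2r ?invr_gt0.
have rN' : (1 - th) * (r - 1) / N <= (1 - th) * (r - 1) / r.
  by apply: ler_wpM2l; [nra | rewrite lef_pV2 ?posrE].
have lnr : (1 - th) * ln r / N <= (1 - th) * (r - 1) / N.
  by apply/ler_wpM2r/ler_wpM2l; rewrite ?invr_ge0 ?subr_ge0 ?ln_le_subr1 // ltW.
have -> : (1 - (1 - th) / N) * ln r = ln r - (1 - th) * ln r / N by field; lra.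
lra.
Qed.

Lemma inf_sup_ratio_bounded (T : Type) (S : set T) (u : T -> R) (K : R) :
  S !=set0 -> (forall x, S x -> 0 < u x) ->
  (forall x y, S x -> S y -> u x <= K * u y) ->
  [/\ 0 < inf (u @` S), forall x, S x -> inf (u @` S) <= u x <= sup (u @` S)
    & sup (u @` S) <= K * inf (u @` S)].
Proof.
move=> [x0 Sx0] u0 uK.
have K0 : 0 < K by have := uK _ _ Sx0 Sx0; have := u0 _ Sx0; nra.
have Sne : u @` S !=set0 by exists (u x0), x0.
have ub : has_ubound (u @` S) by exists (K * u x0) => _ [x Sx <-]; exact: uK.
have lb : has_lbound (u @` S) by exists 0 => _ [x Sx <-]; exact/ltW/u0.
have inf_u x : S x -> inf (u @` S) <= u x by move=> Sx; apply: ge_inf => //; exists x.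
have u_sup x : S x -> u x <= sup (u @` S) by move=> Sx; apply: ub_le_sup => //; exists x.
have supK : sup (u @` S) <= K * inf (u @` S).
  rewrite -ler_pdivrMl //; apply: lb_le_inf => // _ [y Sy <-].
  by rewrite ler_pdivrMl //; apply: ge_sup => // _ [x Sx <-]; exact: uK.
split=> // [|x Sx]; last by rewrite inf_u ?u_sup.
have := u_sup _ Sx0; have := u0 _ Sx0; nra.
Qed.
End LogAndBounds.

Section ContSigma.
Variables (R : realType) (k : nat) (A : 'M[bool]_k).
Implicit Types (f g h : (nat -> 'I_k) -> R) (x y : nat -> 'I_k).

Lemma contSigma_cst (c : R) : contSigma A (fun=> c).
Proof. by move=> x _ e e0; exists 0%N => y _ _; rewrite subrr normr0. Qed.

Lemma contSigma2 f g x e1 e2 : contSigma A f -> contSigma A g -> SigmaA A x ->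
  0 < e1 -> 0 < e2 -> exists N, forall y, SigmaA A y ->
    (forall n, (n < N)%N -> y n = x n) -> `|f y - f x| < e1 /\ `|g y - g x| < e2.
Proof.
move=> cf cg Sx e1_gt0 e2_gt0.
have [N1 fN1] := cf x Sx _ e1_gt0; have [N2 gN2] := cg x Sx _ e2_gt0.
exists (maxn N1 N2) => y Sy yx; split.
  by apply: fN1 => // n nN; apply: yx; rewrite (leq_trans nN) ?leq_maxl.
by apply: gN2 => // n nN; apply: yx; rewrite (leq_trans nN) ?leq_maxr.
Qed.

Lemma contSigma_lin f g h (a b : R) : contSigma A f -> contSigma A g ->
  (forall y, SigmaA A y -> h y = a * f y + b * g y) -> contSigma A h.
Proof.
move=> cf cg eh x Sx e e0.
have ea : 0 < e / 2 / (`|a| + 1) by rewrite !divr_gt0 // ltr_wpDl.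
have eb : 0 < e / 2 / (`|b| + 1) by rewrite !divr_gt0 // ltr_wpDl.
have [N fgN] := contSigma2 cf cg Sx ea eb.
exists N => y Sy yx; have [fy gy] := fgN y Sy yx.
have da := mul_lt_of_lt_div (normr_ge0 a) (normr_ge0 _) fy.
have db := mul_lt_of_lt_div (normr_ge0 b) (normr_ge0 _) gy.
have -> : h y - h x = a * (f y - f x) + b * (g y - g x) by rewrite !eh //; ring.
by apply: le_lt_trans (ler_normD _ _) _; rewrite !normrM; lra.
Qed.

Lemma contSigma_div f g : contSigma A f -> contSigma A g ->
  (forall x, SigmaA A x -> 0 < g x) -> contSigma A (fun y => f y / g y).
Proof.
move=> cf cg g0 x Sx e e0; have gx0 := g0 x Sx.
have e1 : 0 < e * g x / 4 by rewrite !divr_gt0 ?mulr_gt0.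
have e2 : 0 < Num.min (g x / 2) (e * g x ^+ 2 / 4 / (`|f x| + 1)).
  by rewrite lt_min !divr_gt0 ?mulr_gt0 ?exprn_gt0 ?ltr_wpDl.
have [N fgN] := contSigma2 cf cg Sx e1 e2.
exists N => y Sy yx; have [fy] := fgN y Sy yx; rewrite lt_min => /andP[gy gy'].
have gy0 : g x / 2 <= g y by move: gy; rewrite ltr_norml; lra.
have gyx0 : 0 < g y * g x by rewrite mulr_gt0 // (lt_le_trans _ gy0) ?divr_gt0.
have dg := mul_lt_of_lt_div (normr_ge0 (f x)) (normr_ge0 _) gy'.
have -> : f y / g y - f x / g x = ((f y - f x) * g x + f x * (g x - g y)) / (g y * g x).
  by field; rewrite !gt_eqF // (lt_le_trans _ gy0) ?divr_gt0.
rewrite normrM normfV (gtr0_norm gyx0) ltr_pdivrMr //.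
apply: le_lt_trans (ler_normD _ _) _; rewrite !normrM (gtr0_norm gx0) (distrC (g x)).
have : e * (g x / 2 * g x) <= e * (g y * g x) by rewrite ler_pM2l // ler_pM2r.
nra.
Qed.

Lemma ratio_decomposition f g (a b : R) : contSigma A f -> contSigma A g ->
  (forall z, SigmaA A z -> 0 < g z) -> (forall z, SigmaA A z -> a <= f z / g z <= b) ->
  exists2 psi, contSigma A psi & forall z, SigmaA A z ->
    0 <= psi z <= 1 /\ f z = a * g z + (b - a) * (g z * psi z).
Proof.
(* when a = b this psi is 0, since x / 0 = 0 *)
move=> cf cg g0 fg_ab; exists (fun z => (f z / g z - a) / (b - a)).
  apply: (contSigma_lin (a := (b - a)^-1) (b := - ((b - a)^-1 * a))
    (contSigma_div cf cg g0) (contSigma_cst 1)) => z _.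
  by rewrite /= mulr1 mulrBl mulrC [a / _]mulrC.
move=> z Sz; have /andP[au ub] := fg_ab z Sz; have gz0 := g0 z Sz.
have [eab|ab] := eqVneq a b.
  have uz : f z / g z = a by apply/eqP; rewrite eq_le {1}eab ub au.
  by rewrite -eab subrr invr0 !mulr0 addr0 lexx ler01 -uz divfK ?gt_eqF.
have ab0 : 0 < b - a by rewrite subr_gt0 lt_neqAle ab (le_trans au ub).
have -> : 0 <= (f z / g z - a) / (b - a) by rewrite divr_ge0 ?(ltW ab0) ?subr_ge0.
rewrite ler_pdivrMr // mul1r lerD2r ub.
by split=> //; field; rewrite !gt_eqF.
Qed.
End ContSigma.

Section Pdelta.
Variables (R : realType) (k : nat) (A : 'M[bool]_k).
Implicit Types (f g h : (nat -> 'I_k) -> R) (x y z : nat -> 'I_k).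

Lemma Pdelta_of_range (d lo hi : R) h : contSigma A h -> 0 < lo ->
  hi <= expR d * lo -> (forall z, SigmaA A z -> lo <= h z <= hi) -> Pdelta A d h.
Proof.
move=> ch lo0 hid hr; have h0 z : SigmaA A z -> 0 < h z.
  by move=> /hr /andP[+ _]; apply: lt_le_trans.
split=> // x y Sx Sy; rewrite ler_pdivrMr ?h0 //.
have /andP[_ hx] := hr x Sx; have /andP[hy _] := hr y Sy.
by apply: (le_trans hx); apply: (le_trans hid); rewrite ler_wpM2l // ltW ?expR_gt0.
Qed.

Lemma Pdelta_le d g x y : Pdelta A d g -> SigmaA A x -> SigmaA A y -> g x <= expR d * g y.
Proof. by case=> _ g0 gd Sx Sy; rewrite -ler_pdivrMr ?g0 ?gd. Qed.

Lemma Pdelta_ratio_le d f g x y : Pdelta A d f -> Pdelta A d g ->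
  SigmaA A x -> SigmaA A y -> f x / g x <= expR d ^+ 2 * (f y / g y).
Proof.
move=> Pf Pg Sx Sy; have [_ f0 _] := Pf; have [_ g0 _] := Pg.
have fxy := Pdelta_le Pf Sx Sy; have gyx := Pdelta_le Pg Sy Sx.
rewrite ler_pdivrMr ?g0 //.
have -> : expR d ^+ 2 * (f y / g y) * g x = expR d * f y * (expR d * g x) / g y.
  by field; rewrite gt_eqF ?g0.
rewrite ler_pdivlMr ?g0 //.
exact: ler_pM (ltW (f0 _ Sx)) (ltW (g0 _ Sy)) fxy gyx.
Qed.

Lemma Theta_le f g (c : R) : (exists x, SigmaA A x) ->
  (forall x, SigmaA A x -> 0 < f x) -> (forall x, SigmaA A x -> 0 < g x) ->
  (forall x y, SigmaA A x -> SigmaA A y -> ln ((f x / g x) / (f y / g y)) <= c) ->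
  Theta A f g <= c.
Proof.
move=> [x0 Sx0] f0 g0 lnc; have u0 x : SigmaA A x -> 0 < f x / g x.
  by move=> Sx; rewrite divr_gt0 ?f0 ?g0.
have uc x y : SigmaA A x -> SigmaA A y -> f x / g x <= expR c * (f y / g y).
  move=> Sx Sy; have q0 := divr_gt0 (u0 x Sx) (u0 y Sy).
  by rewrite -ler_pdivrMr ?u0 // -[leLHS](lnK q0) ler_expR lnc.
have [inf0 /(_ _ Sx0) /andP[_ sup_u] supc] := inf_sup_ratio_bounded (ex_intro _ x0 Sx0) u0 uc.
rewrite /Theta -[leRHS]expRK ler_ln ?posrE ?divr_gt0 ?expR_gt0 //.
  by rewrite ler_pdivrMr.
exact: lt_le_trans (u0 _ Sx0) sup_u.
Qed.
End Pdelta.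

(* tanh (d'/2) / tanh (d/2) *)
Definition osc_ratio (R : realType) (d d' : R) : R :=
  (expR d' - 1) * (expR d + 1) / ((expR d - 1) * (expR d' + 1)).

Definition spread_ratio (R : realType) (d d' : R) : R :=
  1 - (1 - osc_ratio d d') / expR d ^+ 2.

Definition contraction_rate (R : realType) (d d' : R) : R :=
  1 - (1 - spread_ratio d d') / expR d ^+ 2.

Section Rates.
Variables (R : realType) (d d' : R).
Hypothesis dd : 0 < d' < d.

Let expR2_ge1 : 1 <= expR d ^+ 2.
Proof. by case/andP: dd => d'0 d'd; rewrite expr_ge1 // ltW // expR_gt1 (lt_trans d'0). Qed.

Lemma osc_ratio_ge0_lt1 : 0 <= osc_ratio d d' < 1.
Proof.
case/andP: dd => d'0 d'd; rewrite /osc_ratio.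
have M'1 : 1 < expR d' by rewrite expR_gt1.
have M'M : expR d' < expR d by rewrite ltr_expR.
have den0 : 0 < (expR d - 1) * (expR d' + 1) by rewrite mulr_gt0 //; lra.
by rewrite divr_ge0 ?(ltW den0) ?mulr_ge0 ?ltr_pdivrMr //=; nra.
Qed.

Lemma spread_ratio_ge0_lt1 : 0 <= spread_ratio d d' < 1.
Proof. exact: shrink_ge0_lt1 expR2_ge1 osc_ratio_ge0_lt1. Qed.

Lemma contraction_rate_lt1 : contraction_rate d d' < 1.
Proof. by have /andP[] := shrink_ge0_lt1 expR2_ge1 spread_ratio_ge0_lt1. Qed.
End Rates.

Section PositiveOperator.
Variables (R : realType) (k : nat) (A : 'M[bool]_k).
Variable L : ((nat -> 'I_k) -> R) -> ((nat -> 'I_k) -> R).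
Hypothesis HL : positive_linear_op A L.
Implicit Types (f g h : (nat -> 'I_k) -> R) (x y z : nat -> 'I_k).

Lemma posop_le f g : contSigma A f -> contSigma A g ->
  (forall z, SigmaA A z -> f z <= g z) -> forall x, SigmaA A x -> L f x <= L g x.
Proof.
case: HL => _ Llin Lpos cf cg fg x Sx.
have := Lpos _ (contSigma_lin (a := 1) (b := -1) cg cf (fun _ _ => erefl)) _ x Sx.
by rewrite Llin // mul1r mulN1r subr_ge0; apply => z Sz; rewrite mul1r mulN1r subr_ge0 fg.
Qed.

Lemma posop_lin f g h (a b : R) : contSigma A f -> contSigma A g ->
  (forall z, SigmaA A z -> h z = a * f z + b * g z) ->
  forall x, SigmaA A x -> L h x = a * L f x + b * L g x.
Proof.
move=> cf cg eh x Sx; case: (HL) => _ Llin _.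
have ch := contSigma_lin cf cg eh.
have cfg := contSigma_lin (a := a) (b := b) cf cg (fun _ _ => erefl).
rewrite -Llin //; apply/eqP; rewrite eq_le.
by rewrite !posop_le // => z Sz; rewrite eh.
Qed.

Lemma posop_scale f h (a : R) : contSigma A f ->
  (forall z, SigmaA A z -> h z = a * f z) -> forall x, SigmaA A x -> L h x = a * L f x.
Proof.
move=> cf eh x Sx.
rewrite (posop_lin (a := a) (b := 0) cf cf _ Sx) ?mul0r ?addr0 // => z Sz.
by rewrite mul0r addr0 eh.
Qed.

Lemma posop_ge0_le_one psi x : contSigma A psi ->
  (forall z, SigmaA A z -> 0 <= psi z <= 1) -> SigmaA A x -> 0 <= L psi x <= L (fun=> 1) x.
Proof.
move=> cpsi psi01 Sx; case: (HL) => _ _ Lpos.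
rewrite Lpos // => [|z /psi01 /andP[] //].
by apply: (posop_le cpsi (contSigma_cst 1)) => // z /psi01 /andP[].
Qed.

Section Contraction.
Variables delta delta' : R.
Hypothesis dd : 0 < delta' < delta.
Hypothesis HP : forall g, Pdelta A delta g -> Pdelta A delta' (L g).

Let d_gt0 : 0 < delta. Proof. by case/andP: dd => /lt_trans; apply. Qed.

Lemma posop1_gt0 x : SigmaA A x -> 0 < L (fun=> 1) x.
Proof.
have P1 : Pdelta A delta (fun=> 1).
  apply: (Pdelta_of_range (hi := 1) (contSigma_cst 1) ltr01) => [|z _]; last by rewrite lexx.
  by rewrite mulr1 ltW // expR_gt1.
by case: (HP P1) => _ + _; apply.
Qed.

Lemma posop_osc_le psi x y : contSigma A psi -> (forall z, SigmaA A z -> 0 <= psi z <= 1) ->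
  SigmaA A x -> SigmaA A y ->
  L psi x / L (fun=> 1) x - L psi y / L (fun=> 1) y <= osc_ratio delta delta'.
Proof.
move=> cpsi psi01 Sx Sy; have c1 := contSigma_cst (A := A) (1 : R).
set t := expR delta - 1.
have t0 : 0 < t by rewrite subr_gt0 expR_gt1.
have M'1 : 1 <= expR delta' by case/andP: dd => d'0 _; rewrite ltW // expR_gt1.
have up : Pdelta A delta (fun z => 1 + t * psi z).
  apply: (Pdelta_of_range (lo := 1) (hi := 1 + t)) => //.
  - by apply: (contSigma_lin (a := 1) (b := t) c1 cpsi) => z _; rewrite mul1r.
  - by rewrite mulr1 /t addrC subrK.
  - by move=> z /psi01 /andP[? ?]; apply/andP; split; nra.
have down : Pdelta A delta (fun z => (1 + t) - t * psi z).
  apply: (Pdelta_of_range (lo := 1) (hi := 1 + t)) => //.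
  - by apply: (contSigma_lin (a := 1 + t) (b := - t) c1 cpsi) => z _; rewrite mulr1 mulNr.
  - by rewrite mulr1 /t addrC subrK.
  - by move=> z /psi01 /andP[? ?]; apply/andP; split; nra.
have Lup z : SigmaA A z -> L (fun z => 1 + t * psi z) z = L (fun=> 1) z + t * L psi z.
  by move=> Sz; rewrite (posop_lin (a := 1) (b := t) c1 cpsi _ Sz) ?mul1r // => w _; rewrite mul1r.
have Ldown z : SigmaA A z ->
    L (fun z => (1 + t) - t * psi z) z = (1 + t) * L (fun=> 1) z - t * L psi z.
  move=> Sz; rewrite (posop_lin (a := 1 + t) (b := - t) c1 cpsi _ Sz) ?mulNr // => w _.
  by rewrite mulr1 mulNr.
have hx := Pdelta_le (HP up) Sx Sy; rewrite !Lup // in hx.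
have hy := Pdelta_le (HP down) Sy Sx; rewrite !Ldown // in hy.
have := sub_le_of_cross_bounds t0 M'1 (posop1_gt0 Sx) (posop1_gt0 Sy)
  (posop_ge0_le_one cpsi psi01 Sx) (posop_ge0_le_one cpsi psi01 Sy) hx hy.
have -> : t + 2 = expR delta + 1 by rewrite /t; ring.
by rewrite /osc_ratio -/t.
Qed.

Lemma posop_ratio_lower g F chi (c : R) x : Pdelta A delta g ->
  contSigma A F -> contSigma A chi -> 0 <= c -> (forall z, SigmaA A z -> 0 <= chi z) ->
  (forall z, SigmaA A z -> c * (g z * chi z) <= F z) -> SigmaA A x ->
  c * (L chi x / L (fun=> 1) x) / expR delta ^+ 2 <= L F x / L g x.
Proof.
move=> Pg cF cchi c0 chi0 gF Sx; have [cg g0 _] := Pg.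
set M := expR delta; have M0 : 0 < M := expR_gt0 delta.
have L1x := posop1_gt0 Sx; have gx0 := g0 x Sx.
have Lgx : 0 < L g x by case: (HP Pg) => _ + _; apply.
have Lchi0 : 0 <= L chi x by case: HL => _ _ Lpos; apply: Lpos.
have hF : c * (g x / M) * L chi x <= L F x.
  have cchi' : contSigma A (fun z => c * (g x / M) * chi z).
    by apply: (contSigma_lin (a := c * (g x / M)) (b := 0) cchi cchi) => z _; rewrite mul0r addr0.
  rewrite -(posop_scale (h := fun z => c * (g x / M) * chi z) cchi _ Sx) //.
  apply: posop_le => // z Sz.
  apply: le_trans (gF z Sz); rewrite -mulrA ler_wpM2l // ler_wpM2r ?chi0 //.
  by rewrite ler_pdivrMr // mulrC (Pdelta_le Pg Sx Sz).
have hg : L g x <= M * g x * L (fun=> 1) x.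
  rewrite -(posop_scale (h := fun=> M * g x) (contSigma_cst 1) _ Sx) => [|z _]; last first.
    by rewrite mulr1.
  by apply: (posop_le cg (contSigma_cst _)) => // z Sz; exact: Pdelta_le Pg Sz Sx.
have -> : c * (L chi x / L (fun=> 1) x) / M ^+ 2 =
    c * (g x / M) * L chi x / (M * g x * L (fun=> 1) x).
  by field; rewrite !gt_eqF.
apply: (@le_trans _ _ (L F x / (M * g x * L (fun=> 1) x))).
  by rewrite ler_wpM2r // invr_ge0 ltW // !mulr_gt0.
apply: ler_wpM2l; last by rewrite lef_pV2 ?posrE ?mulr_gt0.
exact: le_trans (mulr_ge0 (mulr_ge0 c0 (divr_ge0 (ltW gx0) (ltW M0))) Lchi0) hF.
Qed.

Section Decomposition.
Variables (f g psi : (nat -> 'I_k) -> R) (a b : R).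
Hypotheses (cf : contSigma A f) (Pg : Pdelta A delta g) (cpsi : contSigma A psi).
Hypothesis psi_dec : forall z, SigmaA A z ->
  0 <= psi z <= 1 /\ f z = a * g z + (b - a) * (g z * psi z).
Hypothesis ab : a <= b.

Let cg : contSigma A g. Proof. by case: Pg. Qed.

Let ba_ge0 : 0 <= b - a. Proof. by rewrite subr_ge0. Qed.

Let Lg_gt0 x : SigmaA A x -> 0 < L g x.
Proof. by case: (HP Pg) => _ + _; apply. Qed.

Lemma ratio_sub_inf_ge y : SigmaA A y ->
  (b - a) * (L psi y / L (fun=> 1) y) / expR delta ^+ 2 <= L f y / L g y - a.
Proof.
move=> Sy; have cF : contSigma A (fun z => f z - a * g z).
  by apply: (contSigma_lin (a := 1) (b := - a) cf cg) => z _; rewrite mul1r mulNr.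
have LF : L (fun z => f z - a * g z) y = L f y - a * L g y.
  by rewrite (posop_lin (a := 1) (b := - a) cf cg _ Sy) => [|z _]; rewrite ?mul1r mulNr.
have -> : L f y / L g y - a = L (fun z => f z - a * g z) y / L g y.
  by rewrite LF; field; rewrite gt_eqF ?Lg_gt0.
apply: (posop_ratio_lower Pg cF cpsi ba_ge0) => // z /psi_dec[/andP[psi0 _] fz] //.
by rewrite fz addrAC subrr add0r.
Qed.

Lemma sup_sub_ratio_ge x : SigmaA A x ->
  (b - a) * (1 - L psi x / L (fun=> 1) x) / expR delta ^+ 2 <= b - L f x / L g x.
Proof.
move=> Sx; have c1 := contSigma_cst (A := A) (1 : R).
have cF : contSigma A (fun z => b * g z - f z).
  by apply: (contSigma_lin (a := b) (b := - 1) cg cf) => z _; rewrite mulN1r.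
have cchi : contSigma A (fun z => 1 - psi z).
  by apply: (contSigma_lin (a := 1) (b := - 1) c1 cpsi) => z _; rewrite mulr1 mulN1r.
have LF : L (fun z => b * g z - f z) x = b * L g x - L f x.
  by rewrite (posop_lin (a := b) (b := - 1) cg cf _ Sx) => [|z _]; rewrite mulN1r.
have Lchi : L (fun z => 1 - psi z) x = L (fun=> 1) x - L psi x.
  by rewrite (posop_lin (a := 1) (b := - 1) c1 cpsi _ Sx) => [|z _]; rewrite ?mul1r ?mulr1 mulN1r.
have -> : 1 - L psi x / L (fun=> 1) x = L (fun z => 1 - psi z) x / L (fun=> 1) x.
  by rewrite Lchi; field; rewrite gt_eqF ?posop1_gt0.
have -> : b - L f x / L g x = L (fun z => b * g z - f z) x / L g x.
  by rewrite LF; field; rewrite gt_eqF ?Lg_gt0.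
apply: (posop_ratio_lower Pg cF cchi ba_ge0) => // z /psi_dec[/andP[_ psi1] fz].
  by rewrite subr_ge0.
by rewrite fz; lra.
Qed.

Lemma ratio_quot_le x y : 0 < a -> SigmaA A x -> SigmaA A y ->
  (L f x / L g x) / (L f y / L g y) <= 1 + spread_ratio delta delta' * (b / a - 1).
Proof.
move=> a0 Sx Sy.
have lo := ratio_sub_inf_ge Sy; have hi := sup_sub_ratio_ge Sx.
have osc := posop_osc_le cpsi (fun z Sz => (psi_dec Sz).1) Sx Sy.
have /andP[th2 _] := spread_ratio_ge0_lt1 dd.
have /andP[Lpsi_y _] := posop_ge0_le_one cpsi (fun z Sz => (psi_dec Sz).1) Sy.
move: lo hi osc (divr_ge0 Lpsi_y (ltW (posop1_gt0 Sy))).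
set rx := L f x / L g x; set ry := L f y / L g y.
rewrite /spread_ratio in th2 *.
set th := osc_ratio _ _ in th2 *; set iM := (expR delta ^+ 2)^-1 in th2 *.
set alx := L psi x / _; set aly := L psi y / _ => lo hi osc aly0.
have iM0 : 0 <= iM by rewrite invr_ge0 exprn_ge0 ?expR_ge0.
have ry_a : a <= ry by have := mulr_ge0 (mulr_ge0 ba_ge0 aly0) iM0; lra.
have diff : rx - ry <= (1 - (1 - th) * iM) * (b - a).
  have osc' : 0 <= th - (alx - aly) by rewrite subr_ge0.
  by have := mulr_ge0 (mulr_ge0 ba_ge0 iM0) osc'; lra.
exact: quot_le_of_sub_le a0 ab ry_a th2 diff.
Qed.

End Decomposition.

End Contraction.
End PositiveOperator.

Theorem lemma5p8 (R : realType) (k : nat) (A : 'M[bool]_k)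
  (L : ((nat -> 'I_k) -> R) -> ((nat -> 'I_k) -> R)) (delta delta' : R) :
  positive_linear_op A L ->
  0 < delta' -> delta' < delta ->
  (forall g, Pdelta A delta g -> Pdelta A delta' (L g)) ->
  exists kappa : R, kappa < 1 /\
    (forall f g, Pdelta A delta f -> Pdelta A delta g ->
       Theta A (L f) (L g) <= kappa * Theta A f g).
Proof.
move=> HL d'0 d'd HP; have dd : 0 < delta' < delta by rewrite d'0 d'd.
exists (contraction_rate delta delta'); split; first exact: contraction_rate_lt1.
move=> f g Pf Pg; have [cf f0 _] := Pf; have [cg g0 _] := Pg.
have [[x0 Sx0]|Sigma0] := pselect (exists x, SigmaA A x); last first.
  rewrite /Theta (_ : SigmaA A = set0) ?image_set0 ?sup0 ?inf0 ?mul0r ?ln0 ?mulr0 //.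
  by apply/seteqP; split=> // x Sx; apply: Sigma0; exists x.
have [inf0 ratio_in sup_le] := inf_sup_ratio_bounded (ex_intro _ x0 Sx0)
  (fun x Sx => divr_gt0 (f0 x Sx) (g0 x Sx)) (fun x y => Pdelta_ratio_le Pf Pg).
have [psi cpsi psi_dec] := ratio_decomposition cf cg g0 ratio_in.
have /andP[inf_u u_sup] := ratio_in x0 Sx0; have inf_sup := le_trans inf_u u_sup.
have /andP[_ spread1] := spread_ratio_ge0_lt1 dd.
have [_ Lf0 _] := HP f Pf; have [_ Lg0 _] := HP g Pg.
apply: Theta_le => [|//|//|x y Sx Sy]; first by exists x0.
rewrite /contraction_rate /Theta.
apply: (ln_le_affine (N := expR delta ^+ 2) _ (ltW spread1) _
  (ratio_quot_le HL dd HP cf Pg cpsi psi_dec inf_sup inf0 Sx Sy)).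
  by rewrite ler_pdivlMr // mul1r inf_sup ler_pdivrMr.
by rewrite !divr_gt0 ?Lf0 ?Lg0.
Qed.
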